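(* Let $q$ be a prime power and let $C_1=[n,k_1,d_1]_q$ and $C_2=[n,k_2,d_2]_q$ be linear codes over $\mathbb{F}_q$ with $C_2\subset C_1$ (giving, via the CSS construction, an AQECC $[[n,k,d_z/d_x]]_q$ with $k=k_1-k_2$). Let $C_2^{e}$ be the extended code of $C_2$ and $(d_2^{e})^{\perp}$ the minimum distance of its Euclidean dual $(C_2^{e})^{\perp}$. Then: (a) if $(d_1)_{even}\leq (d_1)_{odd}$, there exists an AQECC $[[n+1,k,d_z^{e}/d_x^{e}]]_q$ with $d_z^{e}\geq d_1$ and $d_x^{e}\geq (d_2^{e})^{\perp}$; (b) if $(d_1)_{odd}<(d_1)_{even}$, there exists an AQECC $[[n+1,k,d_z^{e}/d_x^{e}]]_q$ with $d_z^{e}\geq d_1+1$ and $d_x^{e}\geq (d_2^{e})^{\perp}$.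
   Context: An AQECC $[[n,k,d_z/d_x]]_q$ is a $q^k$-dimensional subspace of $\mathbb{C}^{q^n}$ correcting all qudit-flip errors up to $\lfloor (d_x-1)/2\rfloor$ and all phase-shift errors up to $\lfloor (d_z-1)/2\rfloor$. CSS construction: if $C_2\subset C_1\subseteq\mathbb{F}_q^n$ are linear of dimensions $k_2<k_1$, there is an AQECC $[[n,k_1-k_2,d_z/d_x]]_q$ with $d_z=\mathrm{wt}(C_1\setminus C_2)$, $d_x=\mathrm{wt}(C_2^{\perp}\setminus C_1^{\perp})$. The extended code of a linear code $C\subseteq\mathbb{F}_q^n$ is $C^{e}=\{(x_1,\dots,x_{n+1}): (x_1,\dots,x_n)\in C,\ x_1+\cdots+x_{n+1}=0\}$. A vector is even-like if its coordinates sum to $0$ and odd-like otherwise; for a code $C$ with minimum distance $d$, $(d)_{even}$ (resp. $(d)_{odd}$) denotes the minimum weight of the nonzero even-like (resp. odd-like) codewords of $C$. *)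

From HB Require Import structures.
From mathcomp Require Import all_boot all_order all_algebra.
Set Implicit Arguments. Unset Strict Implicit. Unset Printing Implicit Defensive.
Import GRing.Theory.
Local Open Scope ring_scope.

(* Linear codes of length n over the finite field F (q = #|F|) are
   F-subspaces of the row space 'rV[F]_n. *)
Section Codes.
Variable F : finFieldType.

Definition wt n (v : 'rV[F]_n) : nat := #|[set i : 'I_n | v 0 i != 0]|.

(* Sum of coordinates; a vector is even-like iff coordsum v = 0. *)
Definition coordsum n (v : 'rV[F]_n) : F := \sum_(i < n) v 0 i.

(* Minimum weight of the vectors of the set A satisfying P; n.+1 (which is
   larger than any weight, i.e. plays the role of +infinity) if there is
   no such vector. *)
Definition minwt n (P : pred 'rV[F]_n) : nat :=
  \big[minn/n.+1]_(v : 'rV[F]_n | P v) wt v.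

Definition wt_diff n (A B : {vspace 'rV[F]_n}) : nat :=
  minwt (fun v => (v \in A) && (v \notin B)).

Definition mindist n (C : {vspace 'rV[F]_n}) : nat :=
  minwt (fun v => (v \in C) && (v != 0)).

Definition mindist_even n (C : {vspace 'rV[F]_n}) : nat :=
  minwt (fun v => [&& v \in C, v != 0 & coordsum v == 0]).
Definition mindist_odd n (C : {vspace 'rV[F]_n}) : nat :=
  minwt (fun v => (v \in C) && (coordsum v != 0)).

Definition dual n (C : {vspace 'rV[F]_n}) : {vspace 'rV[F]_n} :=
  <<[seq v : 'rV[F]_n <- enum [set: 'rV[F]_n] |
      [forall c : 'rV[F]_n, (c \in C) ==> (v *m c^T == 0%R)]]>>%VS.

Definition punct n (v : 'rV[F]_n.+1) : 'rV[F]_n :=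
  \row_(i < n) v 0 (widen_ord (leqnSn n) i).

Definition extend n (C : {vspace 'rV[F]_n}) : {vspace 'rV[F]_n.+1} :=
  <<[seq v <- enum [set: 'rV[F]_n.+1] |
      (punct v \in C) && (coordsum v == 0%R)]>>%VS.

(* CSS construction: the AQECC [[m, k, dz/dx]]_q obtained from a pair of
   linear codes D2 \subset D1 of length m, dim D1 - dim D2 = k,
   dz = wt(D1 \ D2), dx = wt(D2^perp \ D1^perp). *)
Definition css_aqecc m (k dz dx : nat) : Prop :=
  exists (D1 D2 : {vspace 'rV[F]_m}),
    [/\ (D2 <= D1)%VS, (\dim D2 < \dim D1)%N, (\dim D1 - \dim D2)%N = k,
        dz = wt_diff D1 D2 & dx = wt_diff (dual D2) (dual D1)].

End Codes.

From mathcomp Require Import all_boot all_order all_algebra.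
Set Implicit Arguments. Unset Strict Implicit. Unset Printing Implicit Defensive.
Import GRing.Theory.
Local Open Scope ring_scope.

(* Extension u |-> (u, -sum u) is an injective linear map from C onto C^e
   which adds one nonzero coordinate exactly to the odd-like words. Hence the
   CSS pair C_2^e <= C_1^e keeps the dimension difference, its d_z is the
   least weight of an extended nonzero word of C_1, which is at least d_1,
   and at least d_1 + 1 when every word of weight d_1 is odd-like; d_x is at
   least the minimum distance of (C_2^e)^perp since 0 lies in (C_1^e)^perp. *)

Section MinWeight.
Variables (F : finFieldType) (n : nat).
Implicit Types (P Q : pred 'rV[F]_n) (v : 'rV[F]_n).

Lemma wt_le_size v : (wt v <= n)%N.
Proof. by rewrite /wt -[X in (_ <= X)%N]card_ord max_card. Qed.

Lemma minwt_le P v : P v -> (minwt P <= wt v)%N.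
Proof.
move=> Pv; rewrite /minwt -big_filter.
have : v \in [seq x <- index_enum 'rV[F]_n | P x].
  by rewrite mem_filter Pv /index_enum -enumT mem_enum.
elim: [seq _ <- _ | _] => // a s IHs; rewrite inE big_cons.
case/orP=> [/eqP <-|/IHs le_s]; first exact: geq_minl.
by rewrite geq_min le_s orbT.
Qed.

Lemma minwt_le_size P : (minwt P <= n.+1)%N.
Proof.
rewrite /minwt; apply: (big_ind (fun x => x <= n.+1)%N) => //.
  by move=> x y hx _; rewrite geq_min hx.
by move=> v _; apply: leq_trans (wt_le_size v) _.
Qed.

Lemma minwt_ge P m :
  (m <= n.+1)%N -> (forall v, P v -> (m <= wt v)%N) -> (m <= minwt P)%N.
Proof.
move=> mle Pm; rewrite /minwt.
apply: (big_ind (fun x => m <= x)%N) => // x y hx hy.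
by rewrite leq_min hx hy.
Qed.

Lemma minwt_sub P Q : (forall v, Q v -> P v) -> (minwt P <= minwt Q)%N.
Proof.
by move=> QP; apply: minwt_ge (minwt_le_size _) _ => v /QP; apply: minwt_le.
Qed.

Lemma mindist_le_wt_diff (A B : {vspace 'rV[F]_n}) :
  (mindist A <= wt_diff A B)%N.
Proof.
apply: minwt_sub => v /andP [vA vB]; rewrite vA.
by apply: contraNneq vB => ->; apply: mem0v.
Qed.

Lemma coordsum0 : coordsum (0 : 'rV[F]_n) = 0.
Proof. by rewrite /coordsum big1 // => i _; rewrite mxE. Qed.

Lemma mindist_le_odd (C : {vspace 'rV[F]_n}) : (mindist C <= mindist_odd C)%N.
Proof.
apply: minwt_sub => v /andP [-> cv].
by apply: contraNneq cv => ->; rewrite coordsum0.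
Qed.

End MinWeight.

Section Extension.
Variables (F : finFieldType) (n : nat).
Implicit Types (u : 'rV[F]_n) (v : 'rV[F]_n.+1) (C : {vspace 'rV[F]_n}).

Notation widen := (widen_ord (leqnSn n)).

Lemma widen_neq_max (i : 'I_n) : (widen i == ord_max) = false.
Proof. by apply/negbTE; rewrite -val_eqE /= neq_ltn ltn_ord. Qed.

Definition ext_mx : 'M[F]_(n, n.+1) :=
  \matrix_(i, j) (if j == ord_max then -1 else (widen i == j)%:R).

Definition ext : 'Hom('rV[F]_n, 'rV[F]_n.+1) := linfun (mulmxr ext_mx).

Lemma ext_widen u i : ext u 0 (widen i) = u 0 i.
Proof.
rewrite lfunE !mxE (bigD1 i) //= !mxE widen_neq_max eqxx mulr1 big1 ?addr0 //.
move=> k ki; rewrite mxE widen_neq_max.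
suff /negbTE -> : widen k != widen i by rewrite mulr0.
by apply: contra ki => /eqP [] ki; apply/eqP/val_inj.
Qed.

Lemma ext_max u : ext u 0 ord_max = - coordsum u.
Proof.
rewrite lfunE !mxE /coordsum -sumrN; apply: eq_bigr => i _.
by rewrite mxE eqxx mulrN1.
Qed.

Lemma punct_ext u : punct (ext u) = u.
Proof. by apply/rowP => i; rewrite mxE ext_widen. Qed.

Lemma ext_inj : injective ext.
Proof. by move=> u w eq_uw; rewrite -(punct_ext u) eq_uw punct_ext. Qed.

Lemma coordsum_punct v : coordsum v = coordsum (punct v) + v 0 ord_max.
Proof.
rewrite /coordsum big_ord_recr /=; congr (_ + _).
by apply: eq_bigr => i _; rewrite mxE.
Qed.

Lemma coordsum_ext u : coordsum (ext u) = 0.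
Proof. by rewrite coordsum_punct punct_ext ext_max subrr. Qed.

Lemma ext_punct v : coordsum v = 0 -> ext (punct v) = v.
Proof.
rewrite coordsum_punct => /eqP; rewrite addrC addr_eq0 => /eqP vmax.
apply/rowP => j; case: (unliftP ord_max j) => [i ->|->]; last first.
  by rewrite ext_max vmax.
have -> : lift ord_max i = widen i by apply: val_inj; rewrite /= /bump leqNgt ltn_ord.
by rewrite ext_widen mxE.
Qed.

Lemma wt_punct v : wt v = (wt (punct v) + (v 0%R ord_max != 0%R))%N.
Proof.
have wtE m (w : 'rV[F]_m) : wt w = (\sum_(i < m) (w 0%R i != 0%R))%N.
  rewrite /wt cardsE -sum1_card big_mkcond /=; apply: eq_bigr => i _.
  by rewrite unfold_in; case: (w 0 i != 0).
rewrite !wtE big_ord_recr /=; congr (_ + _)%N.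
by apply: eq_bigr => i _; rewrite mxE.
Qed.

Lemma wt_ext u : wt (ext u) = (wt u + (coordsum u != 0%R))%N.
Proof. by rewrite wt_punct punct_ext ext_max oppr_eq0. Qed.

Lemma extendE C : extend C = (ext @: C)%VS.
Proof.
apply/eqP; rewrite eqEsubv; apply/andP; split.
  apply/span_subvP => v; rewrite mem_filter => /andP [/andP [pv /eqP cv] _].
  by rewrite -(ext_punct cv) memv_img.
apply/subvP => _ /memv_imgP [u uC ->]; apply: memv_span.
by rewrite mem_filter punct_ext uC coordsum_ext eqxx mem_enum inE.
Qed.

Lemma extendS C1 C2 : (C2 <= C1)%VS -> (extend C2 <= extend C1)%VS.
Proof. by rewrite !extendE; apply: limgS. Qed.

Lemma dim_extend C : \dim (extend C) = \dim C.
Proof.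
rewrite extendE; apply: limg_dim_eq.
by have /lker0P/eqP -> := ext_inj; rewrite capv0.
Qed.

Lemma wt_extend_nonzero C v :
  v \in extend C -> v != 0 ->
  exists2 u, (u \in C) && (u != 0) & wt v = (wt u + (coordsum u != 0%R))%N.
Proof.
rewrite extendE => /memv_imgP [u uC ->] nz_v; exists u; last exact: wt_ext.
by rewrite uC; apply: contraNneq nz_v => ->; rewrite linear0.
Qed.

Lemma mindist_extend C : (mindist C <= mindist (extend C))%N.
Proof.
apply: minwt_ge; first exact: leq_trans (minwt_le_size _) _.
move=> v /andP [vC nz_v]; have [u Cu ->] := wt_extend_nonzero vC nz_v.
exact: leq_trans (minwt_le Cu) (leq_addr _ _).
Qed.

(* A nonzero even-like word of C keeps its weight, which is then at least
   (d)_even > (d)_odd >= d. *)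
Lemma mindist_extend_odd C :
  (mindist_odd C < mindist_even C)%N -> (mindist C + 1 <= mindist (extend C))%N.
Proof.
move=> odd_lt_even; apply: minwt_ge; first by rewrite addn1 ltnS minwt_le_size.
move=> v /andP [vC nz_v]; have [u /andP [uC nz_u] ->] := wt_extend_nonzero vC nz_v.
case: (eqVneq (coordsum u) 0) => [cu|cu]; last by rewrite leq_add2r minwt_le ?uC.
rewrite addn0 addn1; apply: leq_ltn_trans (mindist_le_odd C) _.
by apply: leq_trans odd_lt_even _; apply: minwt_le; rewrite uC nz_u cu eqxx.
Qed.

End Extension.

Lemma css_aqecc_subspace (F : finFieldType) m (D1 D2 : {vspace 'rV[F]_m}) :
  (D2 <= D1)%VS -> (\dim D2 < \dim D1)%N ->
  css_aqecc F m (\dim D1 - \dim D2) (wt_diff D1 D2) (wt_diff (dual D2) (dual D1)).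
Proof. by move=> sD21 ltD21; exists D1, D2. Qed.

Theorem theorem8 (F : finFieldType) (n : nat) (C1 C2 : {vspace 'rV[F]_n}) :
  (C2 <= C1)%VS -> (\dim C2 < \dim C1)%N ->
  ((mindist_even C1 <= mindist_odd C1)%N ->
     exists dz dx, [/\ css_aqecc F n.+1 (\dim C1 - \dim C2) dz dx,
                       (mindist C1 <= dz)%N
                     & (mindist (dual (extend C2)) <= dx)%N])
  /\
  ((mindist_odd C1 < mindist_even C1)%N ->
     exists dz dx, [/\ css_aqecc F n.+1 (\dim C1 - \dim C2) dz dx,
                       (mindist C1 + 1 <= dz)%N
                     & (mindist (dual (extend C2)) <= dx)%N]).
Proof.
move=> sC21 ltC21.
have := css_aqecc_subspace (extendS sC21); rewrite !dim_extend => /(_ ltC21) css.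
have dz_ge := mindist_le_wt_diff (extend C1) (extend C2).
have dx_ge := mindist_le_wt_diff (dual (extend C2)) (dual (extend C1)).
split=> [_ | odd_lt_even]; do 2!eexists.
  by split; [exact: css | exact: leq_trans (mindist_extend C1) dz_ge | exact: dx_ge].
split; [exact: css | exact: leq_trans (mindist_extend_odd odd_lt_even) dz_ge | exact: dx_ge].
Qed.
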